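(* Let $n,m\ge 3$ and let $G=P_n\square P_m$ be the grid graph. For every $k\ge 3$, no $k$-minimal of $G$ contains more than one corner vertex.
   Context: The grid graph $P_n\square P_m$ has vertex set $\{(i,j):0\le i\le n-1,\ 0\le j\le m-1\}$, with $(i,j)$ adjacent to $(k,l)$ iff $|i-k|+|j-l|=1$; distance $d((i,j),(k,l))=|i-k|+|j-l|$. A vertex $w$ resolves $u,v$ if $d(w,u)\ne d(w,v)$; a set $R$ is resolving if every pair of distinct vertices is resolved by some vertex of $R$; a $k$-minimal is a resolving set $R$ of cardinality $k$ such that no $R\setminus\{x\}$, $x\in R$, is resolving. Corner vertices are the vertices of degree 2, namely $(0,0),(n-1,0),(0,m-1),(n-1,m-1)$. *)

From mathcomp Require Import all_boot.
Set Implicit Arguments. Unset Strict Implicit. Unset Printing Implicit Defensive.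

Definition grid_vertex (n m : nat) := ('I_n * 'I_m)%type.

Definition absdiff (a b : nat) : nat := (a - b) + (b - a).

Definition grid_dist n m (u v : grid_vertex n m) : nat :=
  absdiff u.1 v.1 + absdiff u.2 v.2.

Definition resolves n m (w u v : grid_vertex n m) : bool :=
  grid_dist w u != grid_dist w v.

Definition resolving n m (R : {set grid_vertex n m}) : Prop :=
  forall u v : grid_vertex n m, u <> v -> exists2 w, w \in R & resolves w u v.

Definition k_minimal n m (k : nat) (R : {set grid_vertex n m}) : Prop :=
  [/\ resolving R, #|R| = k & forall x, x \in R -> ~ resolving (R :\ x)].

Definition is_corner n m (v : grid_vertex n m) : bool :=
  (((v.1 : nat) == 0) || ((v.1 : nat) == n.-1)) &&
  (((v.2 : nat) == 0) || ((v.2 : nat) == m.-1)).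

From mathcomp Require Import all_boot.
From mathcomp Require Import zify.
Set Implicit Arguments. Unset Strict Implicit. Unset Printing Implicit Defensive.

(* Two distinct corners either lie on a common side of the grid or are opposite.
   Corners on a common side already resolve the whole grid, so in a resolving set
   of size at least 3 any third vertex is redundant.  For opposite corners the
   distances add up to the diameter, d(c1, u) + d(c2, u) = (n - 1) + (m - 1), so
   c2 resolves exactly the pairs c1 resolves and is redundant as soon as c1 is
   present. *)

Definition endpoint (n a : nat) : bool := (a == 0) || (a == n.-1).

Lemma absdiff_endpoint_inj n a u v : endpoint n a -> u < n -> v < n ->
  absdiff a u = absdiff a v -> u = v.
Proof. by rewrite /endpoint /absdiff => /orP[/eqP-> | /eqP->]; lia. Qed.

Lemma absdiff_opposite_endpoints n a b u : endpoint n a -> endpoint n b ->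
  a != b -> u < n -> absdiff a u + absdiff b u = n.-1.
Proof.
by rewrite /endpoint /absdiff => /orP[/eqP-> | /eqP->] /orP[/eqP-> | /eqP->]; lia.
Qed.

Lemma endpoint_dists_inj n m a b1 b2 u1 u2 v1 v2 :
  endpoint n a -> endpoint m b1 -> endpoint m b2 -> b1 != b2 ->
  u1 < n -> v1 < n -> u2 < m -> v2 < m ->
  absdiff a u1 + absdiff b1 u2 = absdiff a v1 + absdiff b1 v2 ->
  absdiff a u1 + absdiff b2 u2 = absdiff a v1 + absdiff b2 v2 ->
  u1 = v1 /\ u2 = v2.
Proof.
move=> ea eb1 eb2 nb hu1 hv1 hu2 hv2 d1 d2.
have su := absdiff_opposite_endpoints eb1 eb2 nb hu2.
have sv := absdiff_opposite_endpoints eb1 eb2 nb hv2.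
have e1 : u1 = v1 by apply: (absdiff_endpoint_inj ea) => //; lia.
by split=> //; apply: (absdiff_endpoint_inj eb1) => //; lia.
Qed.

Section GridCorners.

Variables n m : nat.
Implicit Types (u v : grid_vertex n m) (S R : {set grid_vertex n m}).

Lemma resolving_superset S R : S \subset R -> resolving S -> resolving R.
Proof.
move=> sSR resS u v nuv; have [w wS hw] := resS u v nuv.
by exists w => //; apply: (subsetP sSR).
Qed.

Lemma side_corners_resolving (c1 c2 : grid_vertex n m) :
  is_corner c1 -> is_corner c2 -> c1 != c2 ->
  (c1.1 == c2.1 :> nat) || (c1.2 == c2.2 :> nat) -> resolving [set c1; c2].
Proof.
case: c1 c2 => [a1 b1] [a2 b2] /andP[ea1 eb1] /andP[ea2 eb2] /= nc side.
move=> [u1 u2] [v1 v2] nuv.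
case: (boolP (resolves (a1, b1) (u1, u2) (v1, v2))) => [r1 | /negbNE/eqP d1].
  by exists (a1, b1); rewrite ?inE ?eqxx.
case: (boolP (resolves (a2, b2) (u1, u2) (v1, v2))) => [r2 | /negbNE/eqP d2].
  by exists (a2, b2); rewrite ?inE ?eqxx ?orbT.
exfalso; apply: nuv; move: d1 d2; rewrite /grid_dist /=.
case/orP: side => /eqP ea.
- have nb : b1 != b2 by apply: contraNneq nc => eb; rewrite (val_inj ea) eb.
  rewrite -(val_inj ea) => d1 d2.
  have [] := endpoint_dists_inj ea1 eb1 eb2 nb (ltn_ord u1) (ltn_ord v1)
    (ltn_ord u2) (ltn_ord v2) d1 d2.
  by move=> /val_inj-> /val_inj->.
- have na : a1 != a2 by apply: contraNneq nc => ea'; rewrite (val_inj ea) ea'.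
  rewrite -(val_inj ea) ![absdiff _ u1 + _]addnC ![absdiff _ v1 + _]addnC => d1 d2.
  have [] := endpoint_dists_inj eb1 ea1 ea2 na (ltn_ord u2) (ltn_ord v2)
    (ltn_ord u1) (ltn_ord v1) d1 d2.
  by move=> /val_inj-> /val_inj->.
Qed.

Lemma opposite_corners_dist (c1 c2 : grid_vertex n m) u :
  is_corner c1 -> is_corner c2 ->
  c1.1 != c2.1 :> nat -> c1.2 != c2.2 :> nat ->
  grid_dist c1 u + grid_dist c2 u = n.-1 + m.-1.
Proof.
case: c1 c2 u => [a1 b1] [a2 b2] [u1 u2] /andP[ea1 eb1] /andP[ea2 eb2] /= na nb.
rewrite /grid_dist /= addnACA.
by rewrite (absdiff_opposite_endpoints ea1 ea2 na (ltn_ord u1))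
           (absdiff_opposite_endpoints eb1 eb2 nb (ltn_ord u2)).
Qed.

Lemma opposite_corners_resolve (c1 c2 : grid_vertex n m) u v :
  is_corner c1 -> is_corner c2 ->
  c1.1 != c2.1 :> nat -> c1.2 != c2.2 :> nat ->
  resolves c2 u v = resolves c1 u v.
Proof.
move=> k1 k2 na nb; rewrite /resolves.
have du := opposite_corners_dist u k1 k2 na nb.
have dv := opposite_corners_dist v k1 k2 na nb.
by apply/idP/idP; apply: contra => /eqP e; apply/eqP; lia.
Qed.

End GridCorners.

Theorem proposition1 (n m k : nat) (R : {set grid_vertex n m}) :
  3 <= n -> 3 <= m -> 3 <= k -> k_minimal k R ->
  #|[set v in R | is_corner v]| <= 1.
Proof.
move=> _ _ hk [resR cardR minR].
rewrite leqNgt; apply/negP => /card_gt1P [c1 [c2 [+ + nc]]].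
rewrite !inE => /andP[c1R k1] /andP[c2R k2].
have [side | opp] := boolP ((c1.1 == c2.1 :> nat) || (c1.2 == c2.2 :> nat)).
- have : 0 < #|R :\: [set c1; c2]|.
    rewrite cardsD cardR.
    have := subset_leq_card (subsetIr R [set c1; c2]).
    rewrite cards2 nc /=; lia.
  case/card_gt0P => x; rewrite !inE => /andP[/norP[nx1 nx2] xR].
  apply: (minR x xR).
  apply: resolving_superset (side_corners_resolving k1 k2 nc side).
  apply/subsetP => y; rewrite !inE => /orP[]/eqP->.
  - by rewrite c1R eq_sym nx1.
  - by rewrite c2R eq_sym nx2.
- have [na nb] : c1.1 != c2.1 :> nat /\ c1.2 != c2.2 :> nat
    by move: opp; rewrite negb_or => /andP[].
  apply: (minR c2 c2R) => u v nuv.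
  have [w wR rw] := resR u v nuv.
  have [ew | nw] := eqVneq w c2.
    exists c1; first by rewrite !inE c1R andbT; apply: contraNneq nc => ->.
    by rewrite -(opposite_corners_resolve u v k1 k2 na nb) -ew.
  by exists w; rewrite ?inE ?nw.
Qed.
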